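(* Let $(X, \|\cdot\|)$ be a real reflexive Banach space. Let $(\|\cdot\|_n)_{n \in \mathbb{N}}$ be a sequence of strictly convex norms on $X$ for which there is a sequence $(s_n)$ of non-negative numbers with $s_n \to 0$ such that for all $n \in \mathbb{N}$ and $x \in X$ $$(1-s_n)\|x\|_n \le \|x\| \le (1+s_n)\|x\|_n.$$ Let $\{F_k\}_{k \in \mathbb{N}}$ be a countable family of convex sets such that for all $k, n \in \mathbb{N}$ the set $F_k$ is a contractive set with respect to $\|\cdot\|_n$. Assume $F = \bigcap_{k \in \mathbb{N}} F_k \neq \emptyset$. Then $F$ is a contractive subset of $X$ with respect to $\|\cdot\|$.
   Context: Given a norm $|\cdot|$ on $X$, a non-empty set $D \subset X$ is contractive with respect to $|\cdot|$ if there exists a mapping $P : X \to D$ with $P|_D = \mathrm{id}_D$ and $|Px - Py| \le |x-y|$ for all $x,y \in X$. *)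

From HB Require Import structures.
From mathcomp Require Import all_boot all_order all_algebra.
From mathcomp Require Import all_classical all_reals all_analysis.
Set Implicit Arguments. Unset Strict Implicit. Unset Printing Implicit Defensive.
Import Order.TTheory GRing.Theory Num.Theory.
Import numFieldNormedType.Exports.
Local Open Scope classical_set_scope.
Local Open Scope ring_scope.

Definition is_norm (R : realType) (X : lmodType R) (N : X -> R) : Prop :=
  [/\ forall x, 0 <= N x,
      forall x, N x = 0 -> x = 0,
      forall (a : R) x, N (a *: x) = `|a| * N x
    & forall x y, N (x + y) <= N x + N y].

Definition strictly_convex_norm (R : realType) (X : lmodType R) (N : X -> R)
  : Prop :=
  forall x y, N x = 1 -> N y = 1 -> x <> y -> N (2^-1 *: (x + y)) < 1.

Definition contractive (R : realType) (X : lmodType R) (N : X -> R)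
  (D : set X) : Prop :=
  D !=set0 /\
  exists P : X -> X,
    [/\ forall x, D (P x),
        forall x, D x -> P x = x
      & forall x y, N (P x - P y) <= N (x - y)].

(* Topological dual and reflexivity, unfolded without a library dual space:
   X is reflexive iff every bounded linear functional Phi on the space of
   continuous linear functionals of X is an evaluation at some x in X.
   A continuous linear functional f has operator norm <= M iff
   |f x| <= M ||x|| for all x; Phi is bounded iff |Phi f| <= C ||f||_op. *)
Definition cont_linear_functional (R : realType) (X : normedModType R)
  (f : X -> R) : Prop :=
  [/\ forall x y, f (x + y) = f x + f y,
      forall (a : R) x, f (a *: x) = a * f x
    & continuous f].

Definition reflexive_space (R : realType) (X : normedModType R) : Prop :=
  forall Phi : (X -> R) -> R,
    (forall f g, cont_linear_functional f -> cont_linear_functional g ->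
       Phi (f \+ g) = Phi f + Phi g) ->
    (forall (a : R) f, cont_linear_functional f ->
       Phi (fun x => a * f x) = a * Phi f) ->
    (exists C : R, forall f (M : R), cont_linear_functional f ->
       (forall x, `|f x| <= M * `|x|) -> `|Phi f| <= C * M) ->
    exists x : X, forall f, cont_linear_functional f -> Phi f = f x.

From HB Require Import structures.
From mathcomp Require Import all_boot all_order all_algebra.
From mathcomp Require Import all_classical all_reals all_analysis.
From mathcomp Require Import ring lra.
Set Implicit Arguments. Unset Strict Implicit. Unset Printing Implicit Defensive.
Import Order.TTheory GRing.Theory Num.Theory.
Import numFieldNormedType.Exports.
Local Open Scope classical_set_scope.
Local Open Scope ring_scope.

(** For every [n] with [s n <= 1/2], Bruck's argument gives a retraction of [X] onto
    [F = \bigcap_k F k] that is nonexpansive for the strictly convex norm [N n]. In a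
    reflexive space, families of maps with bounded orbits have weak pointwise limits along
    ultrafilters, and weak limits do not increase continuous sublinear functionals
    (Hahn-Banach); so Zorn's lemma yields a nonexpansive map [f] fixing [F] that is maximal
    for the order "contracts all distances at least as much". Averaging [f] with a
    nonexpansive retraction onto [F k] keeps these properties, hence by maximality and
    strict convexity the average is [f] itself, i.e. [f] maps into [F k].
    A weak pointwise limit of these retractions along an ultrafilter refining the Frechet
    filter still fixes [F], maps into each [F k] since closed convex sets are weakly closed
    (separation by the Minkowski gauge), and is nonexpansive for [`|_|] because
    [N n] is [(1 + 4 s n)]-close to [`|_|]. *)

Section HahnBanach.
Variables (R : realType) (X : lmodType R) (p : X -> R).
Hypothesis p_add : forall x y, p (x + y) <= p x + p y.
Hypothesis p_hom : forall (a : R) x, 0 < a -> p (a *: x) = a * p x.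

Lemma sublinear0 : p 0 = 0.
Proof. by have := @p_hom 2 0 (ltr0Sn R 1); rewrite scaler0 => h; lra. Qed.

(* Linear functionals on subspaces of [X] dominated by [p], encoded by their graphs. *)
Definition linear_graph_below (G : set (X * R)) :=
  [/\ G (0, 0),
      forall x a b, G (x, a) -> G (x, b) -> a = b,
      forall x y a b, G (x, a) -> G (y, b) -> G (x + y, a + b),
      forall (l : R) x a, G (x, a) -> G (l *: x, l * a)
    & forall x a, G (x, a) -> a <= p x].

Definition graph_adjoin (G : set (X * R)) (x1 : X) (c : R) :=
  [set z | exists x a t, G (x, a) /\ z = (x + t *: x1, a + t * c)].

Lemma graph_adjoin_sub G x1 (c : R) : G `<=` graph_adjoin G x1 c.
Proof. by move=> [x a] Gx; exists x, a, 0; rewrite scale0r mul0r !addr0. Qed.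

Lemma graph_adjoin_point G x1 (c : R) : G (0, 0) -> graph_adjoin G x1 c (x1, c).
Proof. by move=> G0; exists 0, 0, 1; rewrite scale1r mul1r !add0r. Qed.

Lemma graph_adjoin_functional G x1 (c : R) : linear_graph_below G ->
  (forall a, G (x1, a) -> a = c) ->
  forall x a b, graph_adjoin G x1 c (x, a) -> graph_adjoin G x1 c (x, b) -> a = b.
Proof.
move=> [_ Gf GD GZ _] Gx1 _ _ _ [x [a [t [Gx [-> ->]]]]] [y [b [t' [Gy [e ->]]]]].
have [tt'|tt'] := eqVneq t t'.
  by subst t'; move/addIr: e => exy; subst y; rewrite (Gf _ _ _ Gx Gy).
have Gyx : G (y - x, b - a).
  by rewrite -scaleN1r -[- a]mulN1r; apply: GD => //; exact: GZ.
have ex1 : x1 = (t - t')^-1 *: (y - x).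
  apply: (@scalerI _ _ (t - t')); first by rewrite subr_eq0.
  rewrite scalerA mulfV ?subr_eq0 // scale1r scalerBl.
  by apply/eqP; rewrite subr_eq addrAC -e addrAC subrr add0r.
have := GZ (t - t')^-1 _ _ Gyx; rewrite -ex1 => /Gx1 <-.
by field; rewrite subr_eq0.
Qed.

Lemma graph_adjoin_below G x1 (c : R) : linear_graph_below G ->
  (forall x a, G (x, a) -> a - p (x - x1) <= c) ->
  (forall y b, G (y, b) -> c <= p (y + x1) - b) ->
  forall x a, graph_adjoin G x1 c (x, a) -> a <= p x.
Proof.
move=> [_ _ _ GZ Gp] clo chi _ _ [x [a [t [Gx [-> ->]]]]].
have [t0|t0|->] := ltgtP t 0; last by rewrite scale0r mul0r !addr0; exact: Gp.
- have nt0 : 0 < - t by rewrite oppr_gt0.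
  have := clo _ _ (GZ (- t)^-1 _ _ Gx).
  have -> : (- t)^-1 *: x - x1 = (- t)^-1 *: (x + t *: x1).
    by rewrite scalerDr scalerA invrN mulNr mulVf ?lt_eqF // scaleN1r.
  rewrite p_hom ?invr_gt0 // => /(ler_wpM2l (ltW nt0)).
  by rewrite mulrBr !mulrA mulfV ?gt_eqF // !mul1r; lra.
- have := chi _ _ (GZ t^-1 _ _ Gx).
  have -> : t^-1 *: x + x1 = t^-1 *: (x + t *: x1).
    by rewrite scalerDr scalerA mulVf ?gt_eqF // scale1r.
  rewrite p_hom ?invr_gt0 // => /(ler_wpM2l (ltW t0)).
  by rewrite mulrBr !mulrA mulfV ?gt_eqF // !mul1r; lra.
Qed.

Lemma graph_adjoin_linear G x1 (c : R) : linear_graph_below G ->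
  (forall a, G (x1, a) -> a = c) ->
  (forall x a, G (x, a) -> a - p (x - x1) <= c) ->
  (forall y b, G (y, b) -> c <= p (y + x1) - b) ->
  linear_graph_below (graph_adjoin G x1 c).
Proof.
move=> GL Gx1 clo chi; have [G0 _ GD GZ _] := GL; split.
- exact: graph_adjoin_sub.
- exact: graph_adjoin_functional.
- move=> _ _ _ _ [x [a [t [Gx [-> ->]]]]] [y [b [t' [Gy [-> ->]]]]].
  exists (x + y), (a + b), (t + t'); split; first exact: GD.
  by rewrite scalerDl mulrDl; congr pair; exact: addrACA.
- move=> l _ _ [x [a [t [Gx [-> ->]]]]].
  exists (l *: x), (l * a), (l * t); split; first exact: GZ.
  by rewrite scalerDr scalerA mulrDr mulrA.
- exact: graph_adjoin_below.
Qed.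

Lemma graph_extend G x1 : linear_graph_below G -> ~ (exists a, G (x1, a)) ->
  exists c, linear_graph_below (graph_adjoin G x1 c).
Proof.
move=> GL Gx1; have [G0 _ GD _ Gp] := GL.
pose S := [set xa.2 - p (xa.1 - x1) | xa in G].
have ubS y b : G (y, b) -> ubound S (p (y + x1) - b).
  move=> Gy _ [[x a] Gx <-] /=.
  have := Gp _ _ (GD _ _ _ _ Gx Gy); have := p_add (x - x1) (y + x1).
  by rewrite addrACA addNr addr0; lra.
have S0 : S !=set0 by exists (0 - p (0 - x1)), (0, 0).
have supS : has_sup S by split => //; exists (p (0 + x1) - 0); exact: ubS.
exists (sup S); apply: graph_adjoin_linear => //.
- by move=> a Ga; exfalso; apply: Gx1; exists a.
- by move=> x a Gx; apply: sup_upper_bound => //; exists (x, a).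
- by move=> y b Gy; apply: ge_sup => //; exact: ubS.
Qed.

Lemma linear_graph_point : linear_graph_below [set (0, 0)].
Proof.
split=> //.
- by move=> x a b [_ ->] [_ ->].
- by move=> x y a b [-> ->] [-> ->]; rewrite !addr0.
- by move=> l x a [-> ->]; rewrite scaler0 mulr0.
- by move=> x a [-> ->]; rewrite sublinear0.
Qed.

Lemma linear_graph_bigcup (I : Type) (A : set I) (G : I -> set (X * R)) :
  A !=set0 -> (forall i, A i -> linear_graph_below (G i)) ->
  (forall i j, A i -> A j -> G i `<=` G j \/ G j `<=` G i) ->
  linear_graph_below (\bigcup_(i in A) G i).
Proof.
move=> [i0 Ai0] GL Gtot.
have common z1 z2 : (\bigcup_(i in A) G i) z1 -> (\bigcup_(i in A) G i) z2 ->
    exists2 i, A i & G i z1 /\ G i z2.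
  move=> [i Ai Gz1] [j Aj Gz2].
  have [ij|ji] := Gtot _ _ Ai Aj; first by exists j => //; split => //; exact: ij.
  by exists i => //; split => //; exact: ji.
split.
- by exists i0 => //; case: (GL _ Ai0).
- move=> x a b Ga Gb; have [i Ai [{}Ga {}Gb]] := common _ _ Ga Gb.
  by have [_ Gf _ _ _] := GL _ Ai; exact: Gf Ga Gb.
- move=> x y a b Ga Gb; have [i Ai [{}Ga {}Gb]] := common _ _ Ga Gb.
  by have [_ _ GD _ _] := GL _ Ai; exists i => //; exact: GD.
- by move=> l x a [i Ai Ga]; have [_ _ _ GZ _] := GL _ Ai; exists i => //; exact: GZ.
- by move=> x a [i Ai Ga]; have [_ _ _ _ Gp] := GL _ Ai; exact: Gp.
Qed.

Lemma linear_graph_maximal B : linear_graph_below B ->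
  exists G, [/\ linear_graph_below G, B `<=` G &
    forall G', linear_graph_below G' -> G `<=` G' -> G' `<=` G].
Proof.
move=> BL; pose T := {G | linear_graph_below G /\ B `<=` G}.
pose B0 : T := exist _ B (conj BL (@subset_refl _ B)).
pose le_graph (G1 G2 : T) := `[< sval G1 `<=` sval G2 >].
have [[G [GL BG]] Gmax] : exists G, premaximal le_graph G.
  apply: (ZL_preorder B0) => [G|G1 G2 G3 /asboolP G12 /asboolP G23|A Atot].
  - exact/asboolP.
  - by apply/asboolP; exact: subset_trans G23.
  have [[G0 AG0]|A0] := pselect (A !=set0); last first.
    by exists B0 => G AG; exfalso; apply: A0; exists G.
  pose U := \bigcup_(G in A) sval G.
  have UL : linear_graph_below U.
    apply: linear_graph_bigcup; first by exists G0.
      by move=> G _; case: (svalP G).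
    by move=> G1 G2 AG1 AG2; have [/asboolP|/asboolP] := Atot _ _ AG1 AG2; tauto.
  have BU : B `<=` U by move=> z Bz; exists G0 => //; case: (svalP G0) => _; apply.
  by exists (exist _ U (conj UL BU)) => G AG; apply/asboolP => z Gz; exists G.
exists G; split => // G' G'L GG'.
by have /asboolP := Gmax (exist _ G' (conj G'L (subset_trans BG GG'))) (asboolT GG').
Qed.

Lemma linear_graph_total B : linear_graph_below B ->
  exists G, [/\ linear_graph_below G, B `<=` G & forall x, exists a, G (x, a)].
Proof.
move=> /linear_graph_maximal [G [GL BG Gmax]]; exists G; split => // x1.
apply: contrapT => Gx1; have [c GcL] := graph_extend GL Gx1.
have [G0 _ _ _ _] := GL; apply: Gx1; exists c.
exact: Gmax GcL (@graph_adjoin_sub G x1 c) _ (graph_adjoin_point x1 c G0).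
Qed.

Theorem hahn_banach x0 : exists g : X -> R,
  [/\ forall x y, g (x + y) = g x + g y,
      forall (a : R) x, g (a *: x) = a * g x,
      forall x, g x <= p x & g x0 = p x0].
Proof.
have BL : linear_graph_below (graph_adjoin [set (0, 0)] x0 (p x0)).
  apply: graph_adjoin_linear; first exact: linear_graph_point.
  - by move=> a [-> ->]; rewrite sublinear0.
  - move=> x a [-> ->]; have := p_add x0 (0 - x0).
    by rewrite addrC subrK sublinear0 add0r; lra.
  - by move=> y b [-> ->]; rewrite add0r subr0.
have [G [[_ Gf GD GZ Gp] BG Gtot]] := linear_graph_total BL.
have [g Gg] := choice Gtot.
have gE x a : G (x, a) -> g x = a by move=> Ga; exact: Gf _ _ _ (Gg x) Ga.
exists g; split.
- by move=> x y; apply: gE; apply: GD.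
- by move=> a x; apply: gE; apply: GZ.
- by move=> x; apply: Gp.
- by apply: gE; apply: BG; apply: graph_adjoin_point.
Qed.

End HahnBanach.

Section ContinuousFunctionals.
Variables (R : realType) (X : normedModType R).
Local Notation clf := (@cont_linear_functional R X).

Lemma additiveB (g : X -> R) : (forall x y, g (x + y) = g x + g y) ->
  forall x y, g (x - y) = g x - g y.
Proof. by move=> gD x y; have := gD (x - y) y; rewrite subrK => ->; rewrite addrK. Qed.

Lemma bounded_additive_continuous (g : X -> R) (K : R) :
  (forall x y, g (x + y) = g x + g y) -> (forall y, `|g y| <= K * `|y|) ->
  continuous g.
Proof.
move=> gD gK x; apply/cvgrPdist_le => e e0.
have K1 : 0 < `|K| + 1 by rewrite ltr_wpDl.
apply/nbhs_ballP; exists (e / (`|K| + 1)); first by rewrite /= divr_gt0.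
move=> z; rewrite -ball_normE /= -additiveB // => xz.
apply: le_trans (gK _) _; apply: le_trans (_ : (`|K| + 1) * `|x - z| <= e).
  by apply: ler_wpM2r => //; rewrite (le_trans (ler_norm K)) // lerDl.
by rewrite mulrC -ler_pdivlMr // ltW.
Qed.

Lemma clf_bounded f : clf f -> exists2 M, 0 <= M & forall x, `|f x| <= M * `|x|.
Proof.
case=> _ fZ fC; have f0 : f 0 = 0 by rewrite -(scale0r 0) fZ mul0r.
have /cvgrPdist_lt/(_ 1 ltr01) := fC 0; rewrite f0.
move=> /nbhs_ballP [d /= d0 fd]; exists (2 / d); first by rewrite divr_ge0 // ltW.
move=> x; have [->|x0] := eqVneq x 0; first by rewrite f0 !normr0 mulr0.
have nx : 0 < `|x| by rewrite normr_gt0.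
pose c := d / 2 / `|x|; have c0 : 0 < c by rewrite !divr_gt0.
have /fd : ball (0 : X) d (c *: x).
  rewrite -ball_normE /= sub0r normrN normrZ gtr0_norm // divfK ?gt_eqF //.
  by rewrite ltr_pdivrMr // ltr_pMr // ltr1n.
rewrite /= sub0r normrN fZ normrM gtr0_norm // => cfx.
have -> : `|f x| = 2 / d * `|x| * (c * `|f x|) by rewrite /c; field; rewrite ?gt_eqF.
by rewrite ler_piMr ?(ltW cfx) // mulr_ge0 ?divr_ge0 // ltW.
Qed.

Lemma hahn_banach_continuous (q : X -> R) (K : R) :
  (forall x y, q (x + y) <= q x + q y) ->
  (forall (a : R) x, 0 < a -> q (a *: x) = a * q x) ->
  (forall y, q y <= K * `|y|) ->
  forall x, exists g, [/\ clf g, g x = q x & forall y, g y <= q y].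
Proof.
move=> qD qZ qK x; have [g [gD gZ gq gx]] := hahn_banach qD qZ x.
exists g; split => //; split => //.
apply: (@bounded_additive_continuous g `|K|) => // y.
have qKy z : q z <= `|K| * `|z|.
  by apply: le_trans (qK z) _; rewrite ler_wpM2r // ler_norm.
rewrite ler_norml (le_trans (gq y) (qKy y)) andbT lerNl.
by rewrite -mulN1r -gZ scaleN1r -(normrN y); apply: le_trans (gq _) (qKy _).
Qed.

Lemma clf_separates x y : (forall f, clf f -> f x = f y) -> x = y.
Proof.
move=> fxy.
have [|||g [gC gx _]] := @hahn_banach_continuous (fun z : X => `|z|) 1 _ _ _ (x - y).
- exact: ler_normD.
- by move=> a z a0; rewrite normrZ gtr0_norm.
- by move=> z; rewrite mul1r.
apply/eqP; rewrite -subr_eq0 -normr_eq0 -gx.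
by case: (gC) => gD _ _; rewrite additiveB // fxy // subrr.
Qed.

Definition weak_cvg (I : Type) (U : set_system I) (z : I -> X) (x : X) :=
  forall f, clf f -> f (z i) @[i --> U] --> f x.

Section WeakLimits.
Context (I : Type) (U : set_system I) {U_proper : ProperFilter U}.

Lemma weak_cvg_unique z x y : weak_cvg U z x -> weak_cvg U z y -> x = y.
Proof.
by move=> zx zy; apply: clf_separates => f fC; exact: cvg_unique (zx f fC) (zy f fC).
Qed.

Lemma weak_cvg_near_cst z c x : (\forall i \near U, z i = c) -> weak_cvg U z x -> x = c.
Proof.
move=> zc zx; apply: weak_cvg_unique zx _ => f _.
by apply: cvg_near_cst; apply: filterS zc => i ->.
Qed.

Lemma weak_cvgB z w x y : weak_cvg U z x -> weak_cvg U w y ->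
  weak_cvg U (fun i => z i - w i) (x - y).
Proof.
move=> zx wy f fC; have [fD _ _] := fC; rewrite additiveB //.
by under eq_fun do rewrite additiveB //; exact: cvgB (zx f fC) (wy f fC).
Qed.

Lemma weak_cvg_le (q : X -> R) (K : R) z x B :
  (forall x y, q (x + y) <= q x + q y) ->
  (forall (a : R) x, 0 < a -> q (a *: x) = a * q x) ->
  (forall y, q y <= K * `|y|) ->
  weak_cvg U z x -> (\forall i \near U, q (z i) <= B) -> q x <= B.
Proof.
move=> qD qZ qK zx zB; have [g [gC <- gq]] := hahn_banach_continuous qD qZ qK x.
apply: (closed_cvg (fun t => t <= B)) (zx g gC); first exact: closed_le.
by apply: filterS zB => i; exact: le_trans (gq _).
Qed.

End WeakLimits.

Section UltraLimits.
Variables (I : Type) (U : set_system I).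
Hypothesis U_ultra : UltraFilter U.

Lemma ultra_bounded_cvg (a : I -> R) (M : R) :
  (\forall i \near U, `|a i| <= M) -> exists l : R, a i @[i --> U] --> l.
Proof.
move=> aM; have aU : U (a @^-1` `[- M, M]%classic).
  by apply: filterS aM => i /=; rewrite in_itv /= -ler_norml.
have [l [_ al]] := @segment_compact R (- M) M (fmap a U) _ aU; exists l => V Vl.
have [//|aVC] := in_ultra_setVsetC (a @^-1` V) U_ultra.
rewrite preimage_setC in aVC.
by have [t [] //] := al _ _ aVC Vl.
Qed.

Lemma reflexive_weak_cvg (z : I -> X) r : reflexive_space X ->
  (\forall i \near U, `|z i| <= r) -> exists x, weak_cvg U z x.
Proof.
(* In the zero space, [|f x| <= M |x|] holds for negative [M] too, so it is set apart. *)
move=> Xrefl zr; have [[x0 x00]|X0] := pselect (exists x0 : X, x0 != 0); last first.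
  have -> : z = fun=> 0.
    by apply: funext => i; apply: contrapT => /eqP zi0; apply: X0; exists (z i).
  by exists 0 => f _; exact: cvg_cst.
pose Phi (f : X -> R) := lim (f (z i) @[i --> U]).
have fz_bounded f : clf f -> exists2 M, 0 <= M & \forall i \near U, `|f (z i)| <= M * r.
  case/clf_bounded => M M0 fM; exists M => //; apply: filterS zr => i zir.
  exact: le_trans (fM _) (ler_wpM2l M0 zir).
have Phi_cvg f : clf f -> f (z i) @[i --> U] --> Phi f.
  move=> /fz_bounded [M _ fM]; have [l fl] := ultra_bounded_cvg fM.
  by rewrite /Phi (cvg_lim _ fl).
have [x Phix] : exists x : X, forall f, clf f -> Phi f = f x.
  apply: Xrefl.
  - by move=> f g fC gC; apply: cvg_lim => //; exact: cvgD (Phi_cvg f fC) (Phi_cvg g gC).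
  - by move=> a f fC; apply: cvg_lim => //; exact: cvgMl_tmp (Phi_cvg f fC).
  exists r => f M fC fM.
  have M0 : 0 <= M.
    have x0_gt0 : 0 < `|x0| by rewrite normr_gt0.
    by rewrite -(pmulr_lge0 _ x0_gt0) (le_trans _ (fM x0)).
  have fzr : \forall i \near U, - (r * M) <= f (z i) <= r * M.
    apply: filterS zr => i zir.
    by rewrite -ler_norml mulrC; apply: le_trans (fM _) (ler_wpM2l M0 zir).
  rewrite ler_norml; apply/andP; split.
  - apply: (closed_cvg (fun t => - (r * M) <= t)) (Phi_cvg f fC); first exact: closed_ge.
    by apply: filterS fzr => i /andP[].
  - apply: (closed_cvg (fun t => t <= r * M)) (Phi_cvg f fC); first exact: closed_le.
    by apply: filterS fzr => i /andP[].
by exists x => f fC; rewrite -Phix //; exact: Phi_cvg.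
Qed.

Lemma weak_pointwise_limit (f : I -> X -> X) (b : X -> R) : reflexive_space X ->
  (forall x, \forall i \near U, `|f i x| <= b x) ->
  exists g, forall x, weak_cvg U (f^~ x) (g x).
Proof.
move=> Xrefl fb.
by have [g fg] := choice (fun x => reflexive_weak_cvg Xrefl (fb x)); exists g.
Qed.
End UltraLimits.
End ContinuousFunctionals.

Section MinkowskiGauge.
Variables (R : realType) (X : normedModType R) (K : set X) (r : R).
Hypothesis r_gt0 : 0 < r.
Hypothesis K_ball : forall w : X, `|w| < r -> K w.
Hypothesis K_conv : forall a b (l : R), K a -> K b -> 0 <= l -> l <= 1 ->
  K (l *: a + (1 - l) *: b).

Definition gauge_set w := [set t : R | 0 < t /\ K (t^-1 *: w)].
Definition gauge w := inf (gauge_set w).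

Let K0 : K 0. Proof. by apply: K_ball; rewrite normr0. Qed.

Lemma gauge_setS w t t' : gauge_set w t -> t <= t' -> gauge_set w t'.
Proof.
move=> [t0 Kt] tt'; have t'0 := lt_le_trans t0 tt'; split => //.
have := @K_conv _ _ (t / t') Kt K0; rewrite scaler0 addr0 scalerA.
have -> : t / t' * t^-1 = t'^-1 by field; rewrite ?gt_eqF.
apply; first by rewrite divr_ge0 // ltW.
by rewrite ler_pdivrMr // mul1r.
Qed.

Lemma gauge_set_large w t : 0 < t -> 2 * `|w| / r <= t -> gauge_set w t.
Proof.
move=> t0 wt; split => //; apply: K_ball.
rewrite normrZ gtr0_norm ?invr_gt0 // -ltr_pdivlMl ?invr_gt0 // invrK.
rewrite ler_pdivrMr // in wt; have : 0 < r * t by rewrite mulr_gt0.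
by have := normr_ge0 w; nra.
Qed.

Lemma gauge_set_neq0 w : gauge_set w !=set0.
Proof.
exists (2 * `|w| / r + 1); apply: gauge_set_large; last by rewrite lerDl.
by rewrite ltr_wpDl // divr_ge0 // ?mulr_ge0 // ltW.
Qed.

Lemma gauge_le w t : gauge_set w t -> gauge w <= t.
Proof. by move=> wt; apply: ge_inf => //; exists 0 => s [s0 _]; exact: ltW. Qed.

Lemma gauge_lt w t : gauge w < t -> gauge_set w t.
Proof.
by move=> /(inf_lt (gauge_set_neq0 w)) [t' wt' t't]; apply: gauge_setS wt' (ltW t't).
Qed.

Lemma gauge_le_norm w : gauge w <= 2 / r * `|w|.
Proof.
apply/ler_addgt0Pr => e e0; apply/gauge_le/gauge_set_large.
  by rewrite ltr_wpDl // mulr_ge0 // divr_ge0 // ltW.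
by rewrite mulrAC lerDl ltW.
Qed.

Lemma gauge_add z w : gauge (z + w) <= gauge z + gauge w.
Proof.
apply/ler_addgt0Pr => e e0; have e2 : 0 < e / 2 by rewrite divr_gt0.
have [s0 Ks] := gauge_lt (ltr_pwDr e2 (lexx (gauge z))).
have [t0 Kt] := gauge_lt (ltr_pwDr e2 (lexx (gauge w))).
set s := gauge z + e / 2 in s0 Ks *; set t := gauge w + e / 2 in t0 Kt *.
have st0 : 0 < s + t by rewrite addr_gt0.
have -> : gauge z + gauge w + e = s + t by rewrite /s /t; field.
apply: gauge_le; split => //.
have := @K_conv _ _ (s / (s + t)) Ks Kt.
have -> : s / (s + t) *: (s^-1 *: z) + (1 - s / (s + t)) *: (t^-1 *: w) =
    (s + t)^-1 *: (z + w).
  by rewrite !scalerA scalerDr; congr (_ *: _ + _ *: _); field; rewrite ?gt_eqF.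
apply; first by rewrite divr_ge0 // ltW.
by rewrite ler_pdivrMr // mul1r lerDl ltW.
Qed.

Lemma gauge_hom_le (a : R) w : 0 < a -> gauge (a *: w) <= a * gauge w.
Proof.
move=> a0; apply/ler_addgt0Pr => e e0; have ea : 0 < e / a by rewrite divr_gt0.
have [t0 Kt] := gauge_lt (ltr_pwDr ea (lexx (gauge w))).
have -> : a * gauge w + e = a * (gauge w + e / a) by field; rewrite gt_eqF.
apply: gauge_le; split; first by rewrite mulr_gt0.
by rewrite scalerA invfM mulrAC mulVf ?gt_eqF // mul1r.
Qed.

Lemma gauge_hom (a : R) w : 0 < a -> gauge (a *: w) = a * gauge w.
Proof.
move=> a0; apply/eqP; rewrite eq_le gauge_hom_le //=.
have ai : 0 < a^-1 by rewrite invr_gt0.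
have := gauge_hom_le (a *: w) ai; rewrite scalerA mulVf ?gt_eqF // scale1r.
by rewrite -(ler_pM2l a0) mulrA mulfV ?gt_eqF // mul1r.
Qed.

Lemma gauge_le1 w : K w -> gauge w <= 1.
Proof. by move=> Kw; apply: gauge_le; split; rewrite ?ltr01 // invr1 scale1r. Qed.

Lemma gauge_lt1 w : gauge w < 1 -> K w.
Proof. by move=> /gauge_lt [_]; rewrite invr1 scale1r. Qed.

End MinkowskiGauge.

Section ConvexSets.
Variables (R : realType) (X : normedModType R).
Local Notation clf := (@cont_linear_functional R X).

Lemma convex_setP (C : set X) : convex_set (C : set (convex_lmodType X)) ->
  forall a b (l : R), C a -> C b -> 0 <= l -> l <= 1 -> C (l *: a + (1 - l) *: b).
Proof.
move=> Cconv a b l Ca Cb l0 l1.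
by have := Cconv a b (Itv01 l0 l1); rewrite !in_setE; apply.
Qed.

Lemma norm_comb_lt (u v : X) (l D : R) : 0 <= l -> l <= 1 ->
  `|u| < D -> `|v| < D -> `|l *: u + (1 - l) *: v| < D.
Proof.
move=> l0 l1 uD vD; apply: le_lt_trans (ler_normD _ _) _.
rewrite !normrZ (ger0_norm l0) ger0_norm ?subr_ge0 //.
have [uv|vu] := lerP `|u| `|v|.
- have : l * `|u| <= l * `|v| by rewrite ler_wpM2l.
  lra.
- have : (1 - l) * `|v| <= (1 - l) * `|u| by rewrite ler_wpM2l ?subr_ge0 // ltW.
  lra.
Qed.

Definition thickening (C : set X) c0 (r : R) :=
  [set w | exists c u, [/\ C c, `|u| < r & w = c - c0 + u]].

Lemma thickening_ball (C : set X) c0 (r : R) w :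
  C c0 -> `|w| < r -> thickening C c0 r w.
Proof. by move=> Cc0 wr; exists c0, w; rewrite subrr add0r. Qed.

Lemma thickening_convex (C : set X) c0 (r : R) :
  convex_set (C : set (convex_lmodType X)) ->
  forall a b (l : R), thickening C c0 r a -> thickening C c0 r b -> 0 <= l -> l <= 1 ->
  thickening C c0 r (l *: a + (1 - l) *: b).
Proof.
move=> /convex_setP Cconv a b l [c1 [u1 [C1 u1r ->]]] [c2 [u2 [C2 u2r ->]]] l0 l1.
exists (l *: c1 + (1 - l) *: c2), (l *: u1 + (1 - l) *: u2).
split; [exact: Cconv | exact: norm_comb_lt |].
rewrite !scalerDr !scalerN addrACA; congr (_ + _).
by rewrite addrACA -opprD -scalerDl [l + _]addrC subrK scale1r.
Qed.

Lemma convex_separation (C : set X) c0 x (d : R) :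
  convex_set (C : set (convex_lmodType X)) -> C c0 -> 0 < d ->
  (forall c, C c -> d <= `|c - x|) ->
  exists g eps, [/\ clf g, 0 < eps & forall c, C c -> g c <= g x - eps].
Proof.
move=> Cconv Cc0 d0 Cd; have d2 : 0 < d / 2 by rewrite divr_gt0.
pose K := thickening C c0 (d / 2).
have K_ball w : `|w| < d / 2 -> K w by exact: thickening_ball.
have K_conv := @thickening_convex C c0 (d / 2) Cconv.
(* The gauge [q] of [K] is at least [1] at [x - c0] and at most [1] on
   [C - c0 + eps (x - c0)]; a functional [g <= q] norming [x - c0] separates. *)
pose q := gauge K.
have [||| g [gC gx gq]] := @hahn_banach_continuous R X q (2 / (d / 2)) _ _ _ (x - c0).
- exact: gauge_add d2 K_ball K_conv.
- exact: gauge_hom d2 K_ball K_conv.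
- exact: gauge_le_norm d2 K_ball.
have [gD gZ _] := gC.
have q1 : 1 <= q (x - c0).
  rewrite leNgt; apply/negP => /(gauge_lt1 d2 K_ball K_conv) [c [u [Cc ud]]].
  move=> e; have xE : x = c + u by rewrite -(subrK c0 x) e addrAC subrK.
  have := Cd _ Cc; rewrite xE opprD addrA subrr add0r normrN; lra.
pose eps := d / (4 * (`|x - c0| + 1)).
have n1 : 0 < `|x - c0| + 1 by rewrite ltr_wpDl.
have eps0 : 0 < eps by rewrite divr_gt0 // mulr_gt0.
have eps_small : `|eps *: (x - c0)| < d / 2.
  rewrite normrZ gtr0_norm // /eps.
  have -> : d / (4 * (`|x - c0| + 1)) * `|x - c0| = d / 4 * (`|x - c0| / (`|x - c0| + 1)).
    by field; rewrite gt_eqF.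
  have : `|x - c0| / (`|x - c0| + 1) < 1 by rewrite ltr_pdivrMr // mul1r ltrDl.
  have : 0 <= `|x - c0| / (`|x - c0| + 1) by rewrite divr_ge0 // ltW.
  nra.
exists g, eps; split => // c Cc.
have Kc : K (c - c0 + eps *: (x - c0)) by exists c, (eps *: (x - c0)).
have := le_trans (gq _) (gauge_le1 Kc).
rewrite gD gZ gx (additiveB gD).
have : 0 <= eps * (q (x - c0) - 1) by rewrite mulr_ge0 ?subr_ge0 // ltW.
have : g x - g c0 = q (x - c0) by rewrite -(additiveB gD).
nra.
Qed.

Lemma weak_cvg_convex (C : set X) (I : Type) (U : set_system I) (z : I -> X) x :
  ProperFilter U -> convex_set (C : set (convex_lmodType X)) ->
  (forall y, ~ C y -> exists2 d : R, 0 < d & forall c, C c -> d <= `|c - y|) ->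
  weak_cvg U z x -> (\forall i \near U, C (z i)) -> C x.
Proof.
move=> U_proper Cconv Cclosed zx zC; apply: contrapT => /Cclosed [d d0 Cd].
have [i0 Czi0] := filter_ex zC.
have [g [eps [gC eps0 gCx]]] := convex_separation Cconv Czi0 d0 Cd.
have : g x <= g x - eps.
  apply: (closed_cvg (fun t => t <= g x - eps)) (zx g gC); first exact: closed_le.
  by apply: filterS zC => i; exact: gCx.
lra.
Qed.

End ConvexSets.

Definition nonexpansive (R : realType) (X : lmodType R) (q : X -> R) (f : X -> X) :=
  forall x y, q (f x - f y) <= q (x - y).

Definition nonexpansive_retraction (R : realType) (X : lmodType R) (q : X -> R)
    (D : set X) (f : X -> X) :=
  [/\ forall x, D (f x), forall x, D x -> f x = x & nonexpansive q f].

Section NormFacts.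
Variables (R : realType) (X : lmodType R) (q : X -> R).
Hypothesis q_norm : is_norm q.

Lemma is_norm_ge0 x : 0 <= q x. Proof. by case: q_norm. Qed.
Lemma is_norm_eq0 x : q x = 0 -> x = 0. Proof. by case: q_norm => _ + _ _; apply. Qed.
Lemma ler_is_normD x y : q (x + y) <= q x + q y. Proof. by case: q_norm. Qed.
Lemma is_normZ (a : R) x : q (a *: x) = `|a| * q x. Proof. by case: q_norm. Qed.
Lemma is_normpZ (a : R) x : 0 < a -> q (a *: x) = a * q x.
Proof. by move=> a0; rewrite is_normZ gtr0_norm. Qed.

Hypothesis q_sc : strictly_convex_norm q.

Lemma strictly_convex_eq a b : q b <= q a -> q a <= q (2^-1 *: (a + b)) -> a = b.
Proof.
move=> ba amid; have half0 : 0 < 2^-1 :> R by rewrite invr_gt0 ltr0Sn.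
have : q (2^-1 *: (a + b)) <= 2^-1 * (q a + q b).
  by rewrite is_normpZ // ler_pM2l // ler_is_normD.
move=> midab; have qb : q b = q a by lra.
have qmid : q (2^-1 *: (a + b)) = q a by lra.
have [qa0|qa0] := eqVneq (q a) 0.
  by rewrite (is_norm_eq0 qa0) (is_norm_eq0 (etrans qb qa0)).
have qa_gt0 : 0 < q a by rewrite lt_neqAle eq_sym qa0 is_norm_ge0.
apply: contrapT => ab.
have : q (2^-1 *: ((q a)^-1 *: a + (q a)^-1 *: b)) < 1.
  apply: q_sc; rewrite ?is_normpZ ?invr_gt0 ?qb ?mulVf //.
  by move/(scalerI (invr_neq0 qa0)).
by rewrite -scalerDr scalerA mulrC -scalerA is_normpZ ?invr_gt0 // qmid mulVf // ltxx.
Qed.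

End NormFacts.

Section Bruck.
Variables (R : realType) (X : normedModType R) (q : X -> R) (K : R).
Hypothesis X_refl : reflexive_space X.
Hypothesis q_norm : is_norm q.
Hypothesis q_sc : strictly_convex_norm q.
Hypothesis K_ge0 : 0 <= K.
Hypothesis q_le : forall y, q y <= K * `|y|.
Hypothesis le_q : forall y, `|y| <= K * q y.
Variables (I : Type) (F : I -> set X) (P : I -> X -> X) (p0 : X).
Hypothesis P_in : forall k x, F k (P k x).
Hypothesis P_id : forall k x, F k x -> P k x = x.
Hypothesis P_nonexp : forall k, nonexpansive q (P k).
Hypothesis F_p0 : (\bigcap_k F k) p0.

Definition fixes_cap (f : X -> X) := forall x, (\bigcap_k F k) x -> f x = x.

Definition contracts_more (f g : X -> X) := forall x y, q (g x - g y) <= q (f x - f y).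

Lemma fixes_cap_bound f : fixes_cap f -> nonexpansive q f ->
  forall x, `|f x| <= `|p0| + K * q (x - p0).
Proof.
move=> f_fix f_nonexp x; have := f_nonexp x p0; rewrite (f_fix _ F_p0) => fxp0.
have := ler_normD (f x - p0) p0; rewrite subrK => fx_le.
by apply: le_trans fx_le _; rewrite addrC lerD2l (le_trans (le_q _)) // ler_wpM2l.
Qed.

Lemma contracts_more_chain_ub (A : set (X -> X)) : A !=set0 ->
  (forall f, A f -> fixes_cap f /\ nonexpansive q f) -> total_on A contracts_more ->
  exists g, [/\ fixes_cap g, nonexpansive q g & forall f, A f -> contracts_more f g].
Proof.
move=> [f0 Af0] A_good A_tot.
(* Along an ultrafilter refining the tails of the chain, limits dominate every member. *)
pose above f := [set h | A h /\ contracts_more f h].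
have above_filter : ProperFilter (filter_from A above).
  apply: filter_from_proper => [|f Af]; last by exists f; split => // x y.
  apply: filter_from_filter; first by exists f0.
  move=> f1 f2 Af1 Af2; have [f12|f21] := A_tot _ _ Af1 Af2.
  - exists f2 => // h [Ah f2h]; split; split => // x y.
    exact: le_trans (f2h x y) (f12 x y).
  - exists f1 => // h [Ah f1h]; split; split => // x y.
    exact: le_trans (f1h x y) (f21 x y).
have [U [U_ultra above_U]] := ultraFilterLemma above_filter.
have near_A : \forall h \near U, A h by apply: above_U; exists f0 => // h [].
have [g hg] : exists g, forall x, weak_cvg U (fun h => h x) (g x).
  apply: (@weak_pointwise_limit _ _ _ _ U_ultra (fun h x => h x)
    (fun x => `|p0| + K * q (x - p0)) X_refl) => x.
  apply: filterS near_A => h Ah.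
  by have [h_fix h_nonexp] := A_good _ Ah; exact: fixes_cap_bound.
have g_le x y B : (\forall h \near U, q (h x - h y) <= B) -> q (g x - g y) <= B.
  exact: weak_cvg_le (ler_is_normD q_norm) (is_normpZ q_norm) q_le
    (weak_cvgB (hg x) (hg y)).
exists g; split.
- move=> p Fp; apply: weak_cvg_near_cst (hg p); apply: filterS near_A => h Ah.
  by have [h_fix _] := A_good _ Ah; exact: h_fix.
- move=> x y; apply: g_le; apply: filterS near_A => h Ah.
  by have [_ h_nonexp] := A_good _ Ah; exact: h_nonexp.
- move=> f Af x y; apply: g_le; apply: above_U; exists f => // h [_].
  exact.
Qed.

Definition average_with k (f : X -> X) x := 2^-1 *: (f x + P k (f x)).

Lemma average_with_contracts_more k f : fixes_cap f -> nonexpansive q f ->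
  [/\ fixes_cap (average_with k f), nonexpansive q (average_with k f)
    & contracts_more f (average_with k f)].
Proof.
move=> f_fix f_nonexp; have half0 : 0 < 2^-1 :> R by rewrite invr_gt0 ltr0Sn.
have f_more : contracts_more f (average_with k f).
  move=> x y; rewrite /average_with -scalerBr opprD addrACA is_normpZ //.
  have := ler_is_normD q_norm (f x - f y) (P k (f x) - P k (f y)).
  have := P_nonexp k (f x) (f y); lra.
split => //; last by move=> x y; exact: le_trans (f_more x y) (f_nonexp x y).
move=> p Fp; rewrite /average_with f_fix // P_id; last exact: Fp.
by rewrite -mulr2n -[p *+ 2]scaler_nat scalerA mulVf ?pnatr_eq0 // scale1r.
Qed.

(* Maximality makes the averaged map preserve the distance from [f x] to [p0]; strict
   convexity then forces [P k (f x) = f x]. *)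
Lemma contracts_more_maximal_cap f : fixes_cap f -> nonexpansive q f ->
  (forall g, fixes_cap g -> nonexpansive q g -> contracts_more f g -> contracts_more g f) ->
  forall x, (\bigcap_k F k) (f x).
Proof.
move=> f_fix f_nonexp f_max x k _.
have [h_fix h_nonexp f_h] := average_with_contracts_more k f_fix f_nonexp.
have /(_ x p0) := f_max _ h_fix h_nonexp f_h.
have Pp0 : P k p0 = p0 by apply: P_id; exact: F_p0.
rewrite /average_with (f_fix _ F_p0) Pp0 -scalerBr opprD addrACA => midle.
have Pfx_le : q (P k (f x) - P k p0) <= q (f x - p0) by exact: P_nonexp.
rewrite Pp0 in Pfx_le.
by have /addIr -> := strictly_convex_eq q_norm q_sc Pfx_le midle.
Qed.

Lemma bruck_retraction : exists f, nonexpansive_retraction q (\bigcap_k F k) f.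
Proof.
pose T := {f | fixes_cap f /\ nonexpansive q f}.
have id_good : fixes_cap id /\ nonexpansive q id by split.
pose le_map (f g : T) := `[< contracts_more (sval f) (sval g) >].
have [[f [f_fix f_nonexp]] f_max] : exists f, premaximal le_map f.
  apply: (ZL_preorder (exist _ id id_good)).
  - by move=> f; apply/asboolP.
  - move=> f g h /asboolP fg /asboolP gh; apply/asboolP => x y.
    exact: le_trans (gh x y) (fg x y).
  move=> A A_tot; have [[f0 Af0]|A0] := pselect (A !=set0); last first.
    by exists (exist _ id id_good) => f Af; exfalso; apply: A0; exists f.
  pose A' := [set sval f | f in A].
  have A'_good f : A' f -> fixes_cap f /\ nonexpansive q f.
    by case=> f' _ <-; exact: (svalP f').
  have A'_tot : total_on A' contracts_more.
    by move=> _ _ [f Af <-] [g Ag <-]; have [/asboolP|/asboolP] := A_tot _ _ Af Ag; tauto.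
  have [|g [g_fix g_nonexp g_ub]] := contracts_more_chain_ub _ A'_good A'_tot.
    by exists (sval f0), f0.
  exists (exist _ g (conj g_fix g_nonexp)) => f Af.
  by apply/asboolP; apply: g_ub; exists f.
exists f; split => //; apply: contracts_more_maximal_cap => // g g_fix g_nonexp fg.
by have /asboolP := f_max (exist _ g (conj g_fix g_nonexp)) (asboolT fg).
Qed.
End Bruck.

Lemma bruck_contractive (R : realType) (X : normedModType R) (q : X -> R) (K : R)
    (I : Type) (F : I -> set X) :
  reflexive_space X -> is_norm q -> strictly_convex_norm q -> 0 <= K ->
  (forall y, q y <= K * `|y|) -> (forall y, `|y| <= K * q y) ->
  (forall k, contractive q (F k)) -> \bigcap_k F k !=set0 ->
  contractive q (\bigcap_k F k).
Proof.
move=> X_refl q_norm q_sc K0 q_le le_q F_contr [p0 Fp0]; split; first by exists p0.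
have [P P_retr] := choice (fun k => (F_contr k).2).
have P_in k x : F k (P k x) by have [+ _ _] := P_retr k; apply.
have P_id k x : F k x -> P k x = x by have [_ + _] := P_retr k; apply.
have P_nonexp k : nonexpansive q (P k) by have [_ _ +] := P_retr k; apply.
exact: (bruck_retraction X_refl q_norm q_sc K0 q_le le_q P_in P_id P_nonexp Fp0).
Qed.

Section AlmostIsometricNorm.
Variables (R : realType) (X : normedModType R) (q : X -> R) (t : R).
Hypothesis q_ge0 : forall x, 0 <= q x.
Hypothesis t_ge0 : 0 <= t.
Hypothesis t_le_half : t <= 2^-1.
Hypothesis q_equiv : forall x, (1 - t) * q x <= `|x| /\ `|x| <= (1 + t) * q x.

Let twice_t_le1 : 2 * t <= 1.
Proof. by move: t_le_half; lra. Qed.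

Lemma almost_isometric_le x : q x <= 2 * `|x|.
Proof.
have [qx _] := q_equiv x.
have : 0 <= (1 - 2 * t) * q x by rewrite mulr_ge0 // subr_ge0.
lra.
Qed.

Lemma almost_isometric_ge x : `|x| <= 2 * q x.
Proof.
have [_ qx] := q_equiv x.
have : 0 <= (1 - t) * q x by rewrite mulr_ge0 // subr_ge0; move: twice_t_le1; lra.
lra.
Qed.

Lemma almost_isometric_le_norm a b : q a <= q b -> `|a| <= (1 + 4 * t) * `|b|.
Proof.
move=> ab; have [_ qa] := q_equiv a; have [qb _] := q_equiv b.
have : (1 + t) * q b <= (1 + 4 * t) * ((1 - t) * q b).
  rewrite mulrA ler_wpM2r //.
  have : 0 <= t * (1 - 2 * t) by rewrite mulr_ge0 // subr_ge0.
  lra.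
have : (1 + t) * q a <= (1 + t) * q b by rewrite ler_wpM2l // addr_ge0.
have : (1 + 4 * t) * ((1 - t) * q b) <= (1 + 4 * t) * `|b|.
  by rewrite ler_wpM2l // addr_ge0 // mulr_ge0.
lra.
Qed.

Lemma almost_isometric_nonexpansive f : nonexpansive q f ->
  forall x y, `|f x - f y| <= (1 + 4 * t) * `|x - y|.
Proof. by move=> f_nonexp x y; exact: almost_isometric_le_norm (f_nonexp x y). Qed.

Lemma retraction_norm_le (D : set X) f p0 : D p0 -> (forall x, D x -> f x = x) ->
  nonexpansive q f -> forall x, `|f x| <= `|p0| + 4 * `|x - p0|.
Proof.
move=> Dp0 f_fix f_nonexp x; have := f_nonexp x p0; rewrite (f_fix _ Dp0) => fx_le.
have := ler_normD (f x - p0) p0; rewrite subrK addrC => fx_p0.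
have := almost_isometric_ge (f x - p0); have := almost_isometric_le (x - p0); lra.
Qed.

Lemma contractive_dist_gt0 (D : set X) y : contractive q D -> ~ D y ->
  exists2 d : R, 0 < d & forall c, D c -> d <= `|c - y|.
Proof.
move=> [_ [P [P_in P_id P_nonexp]]] Dy.
have Py_y : 0 < `|P y - y|.
  by rewrite normr_gt0 subr_eq0; apply: contraPneq Dy => <-.
(* [|P y - c| <= 2 q (P y - P c) <= 2 q (y - c) <= 4 |y - c|],
   so [|P y - y| <= 5 |y - c|]. *)
exists (`|P y - y| / 5); first by rewrite divr_gt0.
move=> c Dc; have := P_nonexp y c; rewrite (P_id c Dc) => Pyc.
have := almost_isometric_ge (P y - c); have := almost_isometric_le (y - c).
have := ler_normD (P y - c) (c - y); rewrite addrA subrK (distrC c y).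
rewrite ler_pdivrMr //; lra.
Qed.

End AlmostIsometricNorm.

Lemma almost_isometric_bruck (R : realType) (X : normedModType R) (q : X -> R) (t : R)
    (I : Type) (F : I -> set X) :
  reflexive_space X -> is_norm q -> strictly_convex_norm q -> t <= 2^-1 ->
  (forall x, (1 - t) * q x <= `|x| /\ `|x| <= (1 + t) * q x) ->
  (forall k, contractive q (F k)) -> \bigcap_k F k !=set0 ->
  contractive q (\bigcap_k F k).
Proof.
move=> X_refl q_norm q_sc t_le q_equiv.
have q_ge0 := is_norm_ge0 q_norm.
exact: bruck_contractive X_refl q_norm q_sc (ler0n _ 2)
  (almost_isometric_le q_ge0 t_le q_equiv) (almost_isometric_ge q_ge0 t_le q_equiv).
Qed.

Lemma weak_limit_nonexpansive (R : realType) (X : normedModType R) (I : Type)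
    (U : set_system I) {U_proper : ProperFilter U} (f : I -> X -> X) (g : X -> X) :
  (forall x, weak_cvg U (f^~ x) (g x)) ->
  (forall x y e, 0 < e -> \forall i \near U, `|f i x - f i y| <= (1 + e) * `|x - y|) ->
  nonexpansive (fun z : X => `|z|) g.
Proof.
move=> fg f_almost x y.
have g_le e : 0 < e -> `|g x - g y| <= (1 + e) * `|x - y|.
  move=> e0; apply: (weak_cvg_le (K := 1)) (weak_cvgB (fg x) (fg y)) (f_almost x y e e0).
  - exact: ler_normD.
  - by move=> a z a0; rewrite normrZ gtr0_norm.
  - by move=> z; rewrite mul1r.
have xy1 : 0 < `|x - y| + 1 by rewrite ltr_wpDl.
apply/ler_addgt0Pr => e e0; apply: le_trans (g_le (e / (`|x - y| + 1)) _) _.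
  by rewrite divr_gt0.
rewrite mulrDl mul1r lerD2l mulrAC ler_pdivrMr // ler_pM2l //.
by rewrite lerDl.
Qed.

Lemma ultra_cvg0 (R : realType) (s : nat -> R) : s @ \oo --> 0 ->
  exists2 U : set_system nat, UltraFilter U &
    forall e, 0 < e -> \forall n \near U, s n <= e.
Proof.
move=> s0; have [U [U_ultra oo_U]] := @ultraFilterLemma nat \oo _.
exists U => // e e0; apply: oo_U; move/cvgrPdist_le : s0 => /(_ e e0).
by apply: filterS => n; rewrite sub0r normrN; apply: le_trans (ler_norm _).
Qed.

Theorem theorem17 (R : realType) (X : completeNormedModType R)
  (hrefl : reflexive_space X)
  (N : nat -> X -> R)
  (hN : forall n, is_norm (N n))
  (hsc : forall n, strictly_convex_norm (N n))
  (s : nat -> R)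
  (hs0 : forall n, 0 <= s n)
  (hs : s @ \oo --> 0)
  (hequiv : forall n (x : X),
     (1 - s n) * N n x <= `|x| /\ `|x| <= (1 + s n) * N n x)
  (F : nat -> set X)
  (hconv : forall k, convex_set (F k : set (convex_lmodType X)))
  (hcontr : forall k n, contractive (N n) (F k))
  (hne : \bigcap_k F k !=set0) :
  contractive (fun x : X => `|x|) (\bigcap_k F k).
Proof.
have N_ge0 n := is_norm_ge0 (hN n).
have [p0 Fp0] := hne.
have [U U_ultra s_small] := ultra_cvg0 hs.
have s_half : \forall n \near U, s n <= 2^-1 by apply: s_small; rewrite invr_gt0 ltr0Sn.
have retr n : exists f, s n <= 2^-1 -> nonexpansive_retraction (N n) (\bigcap_k F k) f.
  have [small|_] := boolP (s n <= 2^-1); last by exists id.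
  have [_ [f f_retr]] :=
    almost_isometric_bruck hrefl (hN n) (hsc n) small (hequiv n) (hcontr^~ n) hne.
  by exists f.
have [Rf Rf_retr] := choice retr.
have [g gRf] : exists g, forall x, weak_cvg U (Rf^~ x) (g x).
  apply: (weak_pointwise_limit U_ultra (b := fun x => `|p0| + 4 * `|x - p0|)) => // x.
  apply: filterS s_half => n small; have [_ Rf_fix Rf_nonexp] := Rf_retr n small.
  exact: (retraction_norm_le (N_ge0 n) small (hequiv n) Fp0 Rf_fix Rf_nonexp x).
split=> //; exists g; split.
- move=> x k _; apply: weak_cvg_convex (hconv k) _ (gRf x) _.
    have [n small] := filter_ex s_half.
    by have := contractive_dist_gt0 (N_ge0 n) small (hequiv n) (hcontr k n).
  by apply: filterS s_half => n /Rf_retr [Rf_in _ _]; exact: Rf_in.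
- move=> p Fp; apply: weak_cvg_near_cst (gRf p).
  by apply: filterS s_half => n /Rf_retr [_ Rf_fix _]; exact: Rf_fix.
- apply: weak_limit_nonexpansive gRf _ => x y e e0.
  have e4 : 0 < e / 4 by rewrite divr_gt0.
  apply: filterS (filterI s_half (s_small _ e4)) => n [small sn].
  have [_ _ Rf_nonexp] := Rf_retr n small.
  apply: le_trans (almost_isometric_nonexpansive (N_ge0 n) (hs0 n) small (hequiv n)
    Rf_nonexp x y) _.
  by rewrite ler_wpM2r // lerD2l mulrC -ler_pdivlMr.
Qed.
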